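(* Let $P$ be a poset such that $\Sigma P\times\Sigma P$ is a Fréchet space. If either (1) $P$ is compact in its Lawson topology, or (2) $\Sigma P$ is well-filtered and coherent, then $\Sigma P$ is sober.
   Context: For a poset $P$, $\Sigma P$ denotes $P$ with the Scott topology (a set $U$ is Scott open iff $U$ is an upper set and for every directed $D$ with existing supremum, $\bigvee D\in U$ implies $D\cap U\neq\emptyset$). The Lawson topology on $P$ is the topology generated by the Scott open sets together with the sets $P\setminus\uparrow x$, $x\in P$. A topological space is Fréchet if whenever $x$ lies in the closure of a set $A$, some sequence in $A$ converges to $x$. A subset of a space is saturated if it is an upper set in the specialization order ($x\le y$ iff $x\in\overline{\{y\}}$). A space is well-filtered if for every filtered family $\mathcal F$ of compact saturated subsets and every open $U$, $\bigcap\mathcal F\subseteq U$ implies $F\subseteq U$ for some $F\in\mathcal F$. A space is coherent if the intersection of any two compact saturated subsets is compact. A $T_0$ space is sober if every irreducible closed set equals $\overline{\{x\}}$ for some point $x$. *)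

(* Sets are predicates [X -> Prop];
   a topology on a type X is given by its predicate of open sets. *)
From Stdlib Require Import List.

Definition set (X : Type) := X -> Prop.

Definition is_poset {T : Type} (le : T -> T -> Prop) : Prop :=
  (forall x, le x x) /\
  (forall x y, le x y -> le y x -> x = y) /\
  (forall x y z, le x y -> le y z -> le x z).

Definition upper_set {T : Type} (le : T -> T -> Prop) (U : set T) : Prop :=
  forall x y, U x -> le x y -> U y.

Definition directed {T : Type} (le : T -> T -> Prop) (D : set T) : Prop :=
  (exists d, D d) /\
  (forall x y, D x -> D y -> exists z, D z /\ le x z /\ le y z).

Definition is_sup {T : Type} (le : T -> T -> Prop) (D : set T) (s : T) : Prop :=
  (forall d, D d -> le d s) /\
  (forall u, (forall d, D d -> le d u) -> le s u).

Definition scott_open {T : Type} (le : T -> T -> Prop) (U : set T) : Prop :=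
  upper_set le U /\
  (forall (D : set T) (s : T), directed le D -> is_sup le D s -> U s ->
     exists d, D d /\ U d).

(* Topology generated by a subbasis [S]: U is open iff every point of U lies
   in a finite intersection of subbasic sets contained in U
   (the empty intersection being the whole space). *)
Definition generated_open {X : Type} (S : set (set X)) (U : set X) : Prop :=
  forall x, U x ->
    exists l : list (set X),
      (forall B, In B l -> S B) /\
      (forall B, In B l -> B x) /\
      (forall y, (forall B, In B l -> B y) -> U y).

Definition lawson_subbasis {T : Type} (le : T -> T -> Prop) : set (set T) :=
  fun B => scott_open le B \/ exists x, forall y, B y <-> ~ le x y.

Definition lawson_open {T : Type} (le : T -> T -> Prop) : set (set T) :=
  generated_open (lawson_subbasis le).

Definition product_open {X Y : Type} (OX : set (set X)) (OY : set (set Y))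
  (W : set (X * Y)) : Prop :=
  forall p, W p ->
    exists U V, OX U /\ OY V /\ U (fst p) /\ V (snd p) /\
      (forall a b, U a -> V b -> W (a, b)).

Section Top.
Context {X : Type} (O : set (set X)).

Definition closed (C : set X) : Prop := O (fun x => ~ C x).

Definition closure (A : set X) : set X :=
  fun x => forall U, O U -> U x -> exists a, A a /\ U a.

Definition converges (s : nat -> X) (x : X) : Prop :=
  forall U, O U -> U x -> exists N, forall n, N <= n -> U (s n).

Definition frechet : Prop :=
  forall (A : set X) (x : X), closure A x ->
    exists s : nat -> X, (forall n, A (s n)) /\ converges s x.

Definition compact (K : set X) : Prop :=
  forall (I : Type) (F : I -> set X),
    (forall i, O (F i)) ->
    (forall x, K x -> exists i, F i x) ->
    exists l : list I, forall x, K x -> exists i, In i l /\ F i x.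

Definition spec_le (x y : X) : Prop := closure (fun z => z = y) x.

Definition saturated (A : set X) : Prop :=
  forall x y, A x -> spec_le x y -> A y.

Definition compact_saturated (K : set X) : Prop := compact K /\ saturated K.

Definition well_filtered : Prop :=
  forall (F : set (set X)) (U : set X),
    (exists K, F K) ->
    (forall K, F K -> compact_saturated K) ->
    (forall K1 K2, F K1 -> F K2 ->
       exists K3, F K3 /\ (forall x, K3 x -> K1 x /\ K2 x)) ->
    O U ->
    (forall x, (forall K, F K -> K x) -> U x) ->
    exists K, F K /\ (forall x, K x -> U x).

Definition coherent : Prop :=
  forall K1 K2, compact_saturated K1 -> compact_saturated K2 ->
    compact (fun x => K1 x /\ K2 x).

Definition T0 : Prop :=
  forall x y, x <> y ->
    exists U, O U /\ ~ (U x <-> U y).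

Definition irreducible (A : set X) : Prop :=
  (exists a, A a) /\
  forall B C, closed B -> closed C ->
    (forall x, A x -> B x \/ C x) ->
    (forall x, A x -> B x) \/ (forall x, A x -> C x).

Definition sober : Prop :=
  T0 /\
  forall A, closed A -> irreducible A ->
    exists x, forall z, A z <-> closure (fun w => w = x) z.

End Top.

(* Sobriety of the Scott topology amounts to every irreducible Scott-closed set A
   having a greatest element.  Since the square of the space is Frechet, any two
   points a, b of A are Scott limits of a single sequence (z n) in A.
   If the space is well-filtered and coherent, the compact saturated sets
   up({a} u {z n | n >= N}) n up({b} u {z n | n >= N}) all meet A, hence so does
   their intersection, which yields a common upper bound of a and b in A.
   If the poset is Lawson compact, the sets {y | y has a common upper bound with x
   in A} are Scott closed, and so is their union over x = a and the tail of (z n);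
   as it contains the tail it contains b, and so a and b have a common upper bound
   in A.  Either way A is directed, and a directed closed set has a greatest element
   by well-filteredness, resp. Lawson compactness. *)

From Stdlib Require Import List Classical Lia Arith FunctionalExtensionality PropExtensionality.

Section Product.
Context {X Y : Type} (OX : set (set X)) (OY : set (set Y)).

Lemma converges_fst (s : nat -> X * Y) (p : X * Y) :
  OY (fun _ => True) -> converges (product_open OX OY) s p ->
  converges OX (fun n => fst (s n)) (fst p).
Proof.
  intros HY Hs U HU Up.
  apply (Hs (fun q => U (fst q))); [|exact Up].
  intros q Uq; exists U, (fun _ => True); repeat split; auto.
Qed.

Lemma converges_snd (s : nat -> X * Y) (p : X * Y) :
  OX (fun _ => True) -> converges (product_open OX OY) s p ->
  converges OY (fun n => snd (s n)) (snd p).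
Proof.
  intros HX Hs V HV Vp.
  apply (Hs (fun q => V (snd q))); [|exact Vp].
  intros q Vq; exists (fun _ => True), V; repeat split; auto.
Qed.

End Product.

Section Space.
Context {X : Type} (O : set (set X)).

Lemma closed_compl (U : set X) : O U -> closed O (fun x => ~ U x).
Proof.
  intro HU; unfold closed.
  replace (fun x => ~ ~ U x) with U; [exact HU|].
  apply functional_extensionality; intro x.
  apply propositional_extensionality; split; [auto | apply NNPP].
Qed.

Lemma converges_closed (s : nat -> X) (x : X) (C : set X) :
  converges O s x -> closed O C -> (exists N, forall n, N <= n -> C (s n)) -> C x.
Proof.
  intros Hs HC [N HN]; apply NNPP; intro Cx.
  destruct (Hs _ HC Cx) as [M HM].
  apply (HM (max N M)); [lia | apply HN; lia].
Qed.

Lemma irreducible_meets_opens (A U V : set X) (a b : X) :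
  irreducible O A -> O U -> O V -> A a -> U a -> A b -> V b ->
  exists c, A c /\ U c /\ V c.
Proof.
  intros [_ Hirr] HU HV Aa Ua Ab Vb; apply NNPP; intro Hno.
  destruct (Hirr _ _ (closed_compl U HU) (closed_compl V HV)) as [HA|HA].
  - intros x Ax.
    destruct (classic (U x)) as [Ux|]; [|left; assumption].
    right; intro Vx; apply Hno; exists x; auto.
  - exact (HA a Aa Ua).
  - exact (HA b Ab Vb).
Qed.

Lemma well_filtered_meets_closed (F : set (set X)) (A : set X) :
  well_filtered O -> (exists K, F K) -> (forall K, F K -> compact_saturated O K) ->
  (forall K1 K2, F K1 -> F K2 -> exists K3, F K3 /\ (forall x, K3 x -> K1 x /\ K2 x)) ->
  closed O A -> (forall K, F K -> exists x, K x /\ A x) ->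
  exists x, A x /\ forall K, F K -> K x.
Proof.
  intros Hwf Hne Hcs Hfilt HA Hmeet; apply NNPP; intro Hno.
  destruct (Hwf F (fun x => ~ A x) Hne Hcs Hfilt HA) as [K [FK HK]].
  - intros x Hx Ax; apply Hno; exists x; auto.
  - destruct (Hmeet K FK) as [x [Kx Ax]]; exact (HK x Kx Ax).
Qed.

(* The pair (a, b) lies in the closure of the diagonal of A: a basic neighbourhood
   U x V of it meets the diagonal because irreducibility makes U, V and A meet. *)
Lemma frechet_square_common_limit (A : set X) (a b : X) :
  O (fun _ => True) -> frechet (product_open O O) ->
  irreducible O A -> A a -> A b ->
  exists z : nat -> X, (forall n, A (z n)) /\ converges O z a /\ converges O z b.
Proof.
  intros Hfull Hfr Hirr Aa Ab.
  destruct (Hfr (fun p => A (fst p) /\ snd p = fst p) (a, b)) as [s [Hs Hconv]].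
  - intros W HW Wab.
    destruct (HW (a, b) Wab) as [U [V [HU [HV [Ua [Vb HUV]]]]]].
    destruct (irreducible_meets_opens A U V a b Hirr HU HV Aa Ua Ab Vb)
      as [c [Ac [Uc Vc]]].
    exists (c, c); split; [split; auto | apply HUV; auto].
  - exists (fun n => fst (s n)); split; [intro n; apply (Hs n)|split].
    + exact (converges_fst O O s (a, b) Hfull Hconv).
    + intros V HV Vb.
      destruct (converges_snd O O s (a, b) Hfull Hconv V HV Vb) as [N HN].
      exists N; intros n Hn; rewrite <- (proj2 (Hs n)); apply HN; exact Hn.
Qed.

End Space.

Lemma generated_open_union {X : Type} (S : set (set X)) (U V : set X) :
  generated_open S U -> generated_open S V -> generated_open S (fun x => U x \/ V x).
Proof.
  intros HU HV x [Ux|Vx].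
  - destruct (HU x Ux) as [l [HS [Hx Hl]]]; exists l; repeat split; auto.
  - destruct (HV x Vx) as [l [HS [Hx Hl]]]; exists l; repeat split; auto.
Qed.

Lemma generated_open_subbasic {X : Type} (S : set (set X)) (B : set X) :
  S B -> generated_open S B.
Proof.
  intros HB x Bx; exists (B :: nil); repeat split.
  - intros B' [<-|[]]; exact HB.
  - intros B' [<-|[]]; exact Bx.
  - intros y Hy; exact (Hy B (or_introl eq_refl)).
Qed.

Section ScottTopology.
Variable T : Type.
Variable le : T -> T -> Prop.
Hypothesis Hpo : is_poset le.

Notation O := (scott_open le).

Definition lower_set (L : set T) : Prop := forall x y, le x y -> L y -> L x.

Lemma le_refl x : le x x.
Proof. apply (proj1 Hpo). Qed.

Lemma le_trans x y z : le x y -> le y z -> le x z.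
Proof. apply (proj2 (proj2 Hpo)). Qed.

Lemma le_antisym x y : le x y -> le y x -> x = y.
Proof. apply (proj1 (proj2 Hpo)). Qed.

Lemma scott_open_full : O (fun _ => True).
Proof.
  split; [intros ? ? ? ?; exact I|].
  intros D s [[d Dd] _] _ _; exists d; auto.
Qed.

Lemma scott_open_not_le x : O (fun y => ~ le y x).
Proof.
  split.
  - intros y y' Hyx Hyy' Hy'x; apply Hyx; exact (le_trans _ _ _ Hyy' Hy'x).
  - intros D s _ [_ Hleast] Hsx; apply NNPP; intro Hno; apply Hsx, Hleast.
    intros d Dd; apply NNPP; intro Hdx; apply Hno; exists d; auto.
Qed.

Lemma scott_open_upper U x y : O U -> U x -> le x y -> U y.
Proof. intros [HU _] Ux Hxy; exact (HU x y Ux Hxy). Qed.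

Lemma scott_closed_lower A : closed O A -> lower_set A.
Proof.
  intros HA x y Hxy Ay; apply NNPP; intro Ax.
  exact (scott_open_upper _ x y HA Ax Hxy Ay).
Qed.

Lemma scott_closed_sup A D s : closed O A -> directed le D -> is_sup le D s ->
  (forall d, D d -> A d) -> A s.
Proof.
  intros [_ HA] HD Hs HDA; apply NNPP; intro As.
  destruct (HA D s HD Hs As) as [d [Dd Ad]]; exact (Ad (HDA d Dd)).
Qed.

Lemma lower_sup_closed_scott_closed A : lower_set A ->
  (forall D s, directed le D -> is_sup le D s -> (forall d, D d -> A d) -> A s) ->
  closed O A.
Proof.
  intros Hlow Hsup; split.
  - intros x y Ax Hxy Ay; exact (Ax (Hlow x y Hxy Ay)).
  - intros D s HD Hs As; apply NNPP; intro Hno; apply As, (Hsup D s HD Hs).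
    intros d Dd; apply NNPP; intro Ad; apply Hno; exists d; auto.
Qed.

Lemma scott_closure_point x y : closure O (fun w => w = x) y <-> le y x.
Proof.
  split.
  - intro Hy; apply NNPP; intro Hyx.
    destruct (Hy _ (scott_open_not_le x) Hyx) as [w [-> Hxx]].
    exact (Hxx (le_refl x)).
  - intros Hyx U HU Uy; exists x; split; auto.
    exact (scott_open_upper U y x HU Uy Hyx).
Qed.

Lemma upper_set_saturated K : upper_set le K -> saturated O K.
Proof.
  intros HK x y Kx Hxy; apply (HK x y Kx), scott_closure_point, Hxy.
Qed.

Lemma scott_T0 : T0 O.
Proof.
  intros x y Hxy; destruct (classic (le x y)) as [Hle|Hnle].
  - exists (fun w => ~ le w x); split; [apply scott_open_not_le|].
    intros [_ Hyx]; apply Hyx; [|apply le_refl].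
    intro Hle'; exact (Hxy (le_antisym x y Hle Hle')).
  - exists (fun w => ~ le w y); split; [apply scott_open_not_le|].
    intros [Hxy' _]; exact (Hxy' Hnle (le_refl y)).
Qed.

Lemma scott_sober_of_greatest :
  (forall A, closed O A -> irreducible O A -> directed le A) ->
  (forall A, closed O A -> directed le A -> exists w, A w /\ forall a, A a -> le a w) ->
  sober O.
Proof.
  intros Hdir Hgr; split; [exact scott_T0|].
  intros A HA Hirr; destruct (Hgr A HA (Hdir A HA Hirr)) as [w [Aw Hw]].
  exists w; intro y; rewrite scott_closure_point; split; [exact (Hw y)|].
  intro Hyw; exact (scott_closed_lower A HA y w Hyw Aw).
Qed.

Lemma directed_ub_list D (l : list T) : directed le D -> (forall x, In x l -> D x) ->
  exists u, D u /\ forall x, In x l -> le x u.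
Proof.
  intros [[d0 Dd0] Hdir]; induction l as [|x l IH]; intro Hl.
  - exists d0; split; [exact Dd0|intros x []].
  - destruct IH as [u [Du Hu]]; [intros y Hy; apply Hl; right; exact Hy|].
    destruct (Hdir x u (Hl x (or_introl eq_refl)) Du) as [v [Dv [Hxv Huv]]].
    exists v; split; [exact Dv|].
    intros y [<-|Hy]; [exact Hxv | exact (le_trans _ _ _ (Hu y Hy) Huv)].
Qed.

Lemma directed_above D d0 : directed le D -> D d0 -> directed le (fun d => D d /\ le d0 d).
Proof.
  intros [_ Hdir] Dd0; split; [exists d0; split; [exact Dd0|apply le_refl]|].
  intros x y [Dx Hx] [Dy Hy]; destruct (Hdir x y Dx Dy) as [v [Dv [Hxv Hyv]]].
  exists v; repeat split; auto; exact (le_trans _ _ _ Hx Hxv).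
Qed.

Lemma is_sup_above D d0 s : directed le D -> D d0 -> is_sup le D s ->
  is_sup le (fun d => D d /\ le d0 d) s.
Proof.
  intros [_ Hdir] Dd0 [Hub Hleast]; split; [intros d [Dd _]; exact (Hub d Dd)|].
  intros u Hu; apply Hleast; intros d Dd.
  destruct (Hdir d d0 Dd Dd0) as [v [Dv [Hdv Hd0v]]].
  exact (le_trans _ _ _ Hdv (Hu v (conj Dv Hd0v))).
Qed.

Lemma directed_sub_finite_union {J : Type} (L : J -> set T) (l : list J) D :
  (forall i, lower_set (L i)) -> directed le D ->
  (forall d, D d -> exists i, In i l /\ L i d) ->
  exists i, In i l /\ forall d, D d -> L i d.
Proof.
  intro Hlow; revert D; induction l as [|i l IH]; intros D HD Hcov.
  - destruct HD as [[d Dd] _]; destruct (Hcov d Dd) as [i [[] _]].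
  - destruct (classic (forall d, D d -> L i d)) as [Hall|Hnot].
    + exists i; split; [left; reflexivity|exact Hall].
    + apply not_all_ex_not in Hnot; destruct Hnot as [d1 Hd1].
      assert (Dd1 : D d1) by (apply NNPP; intro; apply Hd1; intro; contradiction).
      destruct (IH (fun d => D d /\ le d1 d) (directed_above D d1 HD Dd1)) as [j [Hj HLj]].
      * intros d [Dd Hd1d]; destruct (Hcov d Dd) as [k [[<-|Hk] Lkd]].
        -- exfalso; apply Hd1; intros _; exact (Hlow i d1 d Hd1d Lkd).
        -- exists k; split; assumption.
      * exists j; split; [right; exact Hj|].
        intros d Dd; destruct (proj2 HD d d1 Dd Dd1) as [v [Dv [Hdv Hd1v]]].
        exact (Hlow j d v Hdv (HLj v (conj Dv Hd1v))).
Qed.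

Definition common_ub_in (A : set T) (x y : T) : Prop := exists w, A w /\ le x w /\ le y w.

Lemma common_ub_in_sym A x y : common_ub_in A x y -> common_ub_in A y x.
Proof. intros [w [Aw [Hx Hy]]]; exists w; auto. Qed.

Lemma common_ub_in_lower A x : lower_set (common_ub_in A x).
Proof.
  intros y y' Hyy' [w [Aw [Hx Hy']]]; exists w; repeat split; auto.
  exact (le_trans _ _ _ Hyy' Hy').
Qed.

Definition up_tail (z : nat -> T) (a : T) (N : nat) : set T :=
  fun x => le a x \/ exists n, N <= n /\ le (z n) x.

Lemma up_tail_upper z a N : upper_set le (up_tail z a N).
Proof.
  intros x y [Hax|[n [Hn Hzx]]] Hxy; [left|right; exists n; split; [exact Hn|]];
    eapply le_trans; eassumption.
Qed.

Lemma up_tail_antitone z a N1 N2 x : N1 <= N2 -> up_tail z a N2 x -> up_tail z a N1 x.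
Proof.
  intros HN [Hax|[n [Hn Hzx]]]; [left; exact Hax|right; exists n; split; [lia|exact Hzx]].
Qed.

Lemma up_compact a : compact O (fun x => le a x).
Proof.
  intros I F HF Hcov; destruct (Hcov a (le_refl a)) as [i Fia].
  exists (i :: nil); intros x Hax; exists i; split; [left; reflexivity|].
  exact (scott_open_upper _ a x (HF i) Fia Hax).
Qed.

(* An open set covering the limit [a] contains a whole tail of [z];
   the finitely many remaining points need finitely many more opens. *)
Lemma up_tail_compact z a N : converges O z a -> compact O (up_tail z a N).
Proof.
  intros Hz I F HF Hcov.
  destruct (Hcov a (or_introl (le_refl a))) as [i0 Fi0a].
  destruct (Hz (F i0) (HF i0) Fi0a) as [M HM].
  assert (Hfin : forall k, exists l : list I, forall n, N <= n < N + k ->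
                   exists i, In i l /\ F i (z n)).
  { induction k as [|k [l Hl]].
    - exists nil; intros; lia.
    - destruct (Hcov (z (N + k))) as [i Fiz].
      { right; exists (N + k); split; [lia|apply le_refl]. }
      exists (i :: l); intros n Hn; destruct (Nat.eq_dec n (N + k)) as [->|Hne].
      + exists i; split; [left; reflexivity|exact Fiz].
      + destruct (Hl n) as [j [Hj Fjz]]; [lia|].
        exists j; split; [right; exact Hj|exact Fjz]. }
  destruct (Hfin M) as [l Hl]; exists (i0 :: l).
  intros x [Hax|[n [Hn Hzx]]].
  - exists i0; split; [left; reflexivity|].
    exact (scott_open_upper _ a x (HF i0) Fi0a Hax).
  - destruct (le_lt_dec M n) as [HMn|HnM].
    + exists i0; split; [left; reflexivity|].
      exact (scott_open_upper _ (z n) x (HF i0) (HM n HMn) Hzx).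
    + destruct (Hl n) as [j [Hj Fjz]]; [lia|].
      exists j; split; [right; exact Hj|].
      exact (scott_open_upper _ (z n) x (HF j) Fjz Hzx).
Qed.

Lemma le_of_up_tails z a w : converges O z a -> (forall N, up_tail z a N w) -> le a w.
Proof.
  intros Hz Hw; apply NNPP; intro Haw.
  destruct (Hz _ (scott_open_not_le w) Haw) as [M HM].
  destruct (Hw M) as [H|[n [Hn Hzw]]]; [exact (Haw H)|exact (HM n Hn Hzw)].
Qed.

Section WellFilteredCoherent.
Hypothesis Hwf : well_filtered O.

(* Well-filteredness applied to the compact saturated sets
   [up_tail z a N /\ up_tail z b N], which all meet [A] at [z N]. *)
Lemma well_filtered_common_ub (A : set T) (z : nat -> T) (a b : T) :
  coherent O -> closed O A -> (forall n, A (z n)) ->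
  converges O z a -> converges O z b -> common_ub_in A a b.
Proof.
  intros Hcoh HA Hz Ha Hb.
  set (K N := fun x => up_tail z a N x /\ up_tail z b N x).
  destruct (well_filtered_meets_closed O (fun S => exists N, S = K N) A Hwf)
    as [w [Aw Hw]].
  - exists (K 0), 0; reflexivity.
  - intros S [N ->]; split.
    + apply Hcoh; split;
        solve [apply up_tail_compact; assumption | apply upper_set_saturated, up_tail_upper].
    + apply upper_set_saturated; intros x y [Hxa Hxb] Hxy.
      split; eapply up_tail_upper; eassumption.
  - intros S1 S2 [N1 ->] [N2 ->]; exists (K (max N1 N2)).
    split; [exists (max N1 N2); reflexivity|].
    intros x [Hxa Hxb]; split; split; eapply up_tail_antitone; try eassumption; lia.
  - exact HA.
  - intros S [N ->]; exists (z N); split; [|apply Hz].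
    split; right; exists N; split; [lia|apply le_refl|lia|apply le_refl].
  - exists w; split; [exact Aw|].
    split; apply (le_of_up_tails z); try assumption; intro N;
      apply (Hw (K N) (ex_intro _ N eq_refl)).
Qed.

Lemma well_filtered_directed_greatest (A : set T) :
  closed O A -> directed le A -> exists w, A w /\ forall a, A a -> le a w.
Proof.
  intros HA [[a0 Aa0] Hdir].
  destruct (well_filtered_meets_closed O
              (fun S => exists a, A a /\ S = (fun x => le a x)) A Hwf)
    as [w [Aw Hw]].
  - exists (fun x => le a0 x), a0; split; [exact Aa0|reflexivity].
  - intros S [a [_ ->]]; split; [apply up_compact|].
    apply upper_set_saturated; intros x y Hax Hxy; exact (le_trans _ _ _ Hax Hxy).
  - intros S1 S2 [a1 [A1 ->]] [a2 [A2 ->]].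
    destruct (Hdir a1 a2 A1 A2) as [v [Av [H1 H2]]].
    exists (fun x => le v x); split; [exists v; split; [exact Av|reflexivity]|].
    intros x Hvx; split; eapply le_trans; eassumption.
  - exact HA.
  - intros S [a [Aa ->]]; exists a; split; [apply le_refl|exact Aa].
  - exists w; split; [exact Aw|]; intros a Aa; exact (Hw _ (ex_intro _ a (conj Aa eq_refl))).
Qed.

End WellFilteredCoherent.

Lemma lawson_open_scott_open U : O U -> lawson_open le U.
Proof. intro HU; apply generated_open_subbasic; left; exact HU. Qed.

Lemma lawson_open_not_ge x : lawson_open le (fun y => ~ le x y).
Proof. apply generated_open_subbasic; right; exists x; reflexivity. Qed.

Lemma lawson_closed_scott_closed A : closed O A -> closed (lawson_open le) A.
Proof. apply lawson_open_scott_open. Qed.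

Lemma lawson_closed_above A x :
  closed O A -> closed (lawson_open le) (fun y => A y /\ le x y).
Proof.
  intro HA; unfold closed.
  replace (fun y => ~ (A y /\ le x y)) with (fun y => ~ A y \/ ~ le x y).
  - apply generated_open_union; [exact (lawson_open_scott_open _ HA)|apply lawson_open_not_ge].
  - apply functional_extensionality; intro y; apply propositional_extensionality.
    split; [tauto|intro Hy; apply NNPP; tauto].
Qed.

Section LawsonCompact.
Hypothesis HL : compact (lawson_open le) (fun _ => True).

(* The complements of the Lawson-closed sets [B /\ up d] would otherwise cover [T];
   a finite subcover is refuted by an upper bound in [B] of finitely many [d]. *)
Lemma lawson_compact_directed_ub (B D : set T) :
  closed (lawson_open le) B -> directed le D ->
  (forall d, D d -> exists w, B w /\ le d w) ->
  exists w, B w /\ forall d, D d -> le d w.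
Proof.
  intros HB HD HDB; apply NNPP; intro Hno.
  destruct (HL {d | D d} (fun i y => ~ le (proj1_sig i) y \/ ~ B y)) as [l Hl].
  - intro i; apply generated_open_union; [apply lawson_open_not_ge|exact HB].
  - intros y _; destruct (classic (B y)) as [By|nBy].
    + apply NNPP; intro Hy; apply Hno; exists y; split; [exact By|].
      intros d Dd; apply NNPP; intro Hdy; apply Hy; exists (exist _ d Dd); left; exact Hdy.
    + destruct HD as [[d Dd] _]; exists (exist _ d Dd); right; exact nBy.
  - destruct (directed_ub_list D (map (@proj1_sig _ _) l) HD) as [u [Du Hu]].
    { intros x Hx; apply in_map_iff in Hx; destruct Hx as [[d Dd] [<- _]]; exact Dd. }
    destruct (HDB u Du) as [w [Bw Huw]].
    destruct (Hl w I) as [[d Dd] [Hin [Hdw|nBw]]]; [|exact (nBw Bw)].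
    apply Hdw, (le_trans _ u); [|exact Huw].
    apply Hu, in_map_iff; exists (exist _ d Dd); split; [reflexivity|exact Hin].
Qed.

Lemma lawson_directed_greatest A :
  closed O A -> directed le A -> exists w, A w /\ forall a, A a -> le a w.
Proof.
  intros HA HdirA; apply lawson_compact_directed_ub;
    [exact (lawson_closed_scott_closed A HA)|exact HdirA|].
  intros d Ad; exists d; split; [exact Ad|apply le_refl].
Qed.

Lemma common_ub_in_closed A x : closed O A -> closed O (common_ub_in A x).
Proof.
  intro HA; apply lower_sup_closed_scott_closed; [apply common_ub_in_lower|].
  intros D s HD Hs HDx.
  destruct (lawson_compact_directed_ub (fun y => A y /\ le x y) D
              (lawson_closed_above A x HA) HD) as [w [[Aw Hxw] Hw]].
  { intros d Dd; destruct (HDx d Dd) as [w [Aw [Hxw Hdw]]]; exists w; auto. }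
  exists w; repeat split; [exact Aw|exact Hxw|exact (proj2 Hs w Hw)].
Qed.

(* A directed set [D] in this union that leaves the first member has a final
   segment [D /\ up d0] avoiding it; since [z] converges to [a], only finitely
   many further members can meet that segment, so one of them contains it. *)
Lemma common_ub_tail_closed A z a N : closed O A -> converges O z a ->
  closed O (fun y => common_ub_in A a y \/ exists n, N <= n /\ common_ub_in A (z n) y).
Proof.
  intros HA Hz; apply lower_sup_closed_scott_closed.
  { intros y y' Hyy' [Hay|[n [Hn Hzy]]];
      [left|right; exists n; split; [exact Hn|]]; eapply common_ub_in_lower; eassumption. }
  intros D s HD Hs HDC.
  destruct (classic (forall d, D d -> common_ub_in A a d)) as [HDa|HDa].
  { left; exact (scott_closed_sup _ D s (common_ub_in_closed A a HA) HD Hs HDa). }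
  apply not_all_ex_not in HDa; destruct HDa as [d0 Hd0].
  assert (Dd0 : D d0) by (apply NNPP; intro; apply Hd0; intro; contradiction).
  assert (Had0 : ~ common_ub_in A a d0) by (intro; apply Hd0; auto).
  destruct (Hz _ (common_ub_in_closed A d0 HA)) as [M HM].
  { intro H; exact (Had0 (common_ub_in_sym _ _ _ H)). }
  destruct (directed_sub_finite_union (fun n => common_ub_in A (z n)) (seq N (M - N))
              (fun d => D d /\ le d0 d)) as [n [Hn HDn]].
  - intro n; apply common_ub_in_lower.
  - exact (directed_above D d0 HD Dd0).
  - intros d [Dd Hd0d]; destruct (HDC d Dd) as [Had|[n [Hn Hzd]]].
    + exfalso; exact (Had0 (common_ub_in_lower _ _ _ _ Hd0d Had)).
    + exists n; split; [|exact Hzd]; apply in_seq.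
      destruct (le_lt_dec M n) as [HMn|]; [|lia].
      exfalso; apply (HM n HMn), common_ub_in_sym, (common_ub_in_lower _ _ _ _ Hd0d Hzd).
  - right; exists n; split; [apply in_seq in Hn; lia|].
    exact (scott_closed_sup _ _ s (common_ub_in_closed A (z n) HA)
             (directed_above D d0 HD Dd0) (is_sup_above D d0 s HD Dd0 Hs) HDn).
Qed.

Lemma lawson_common_ub A z a b : closed O A -> (forall n, A (z n)) ->
  converges O z a -> converges O z b -> common_ub_in A a b.
Proof.
  intros HA Hz Ha Hb; apply NNPP; intro Hab.
  destruct (Ha _ (common_ub_in_closed A b HA)) as [N HN].
  { intro H; exact (Hab (common_ub_in_sym _ _ _ H)). }
  destruct (converges_closed O z b _ Hb (common_ub_tail_closed A z a N HA Ha))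
    as [Hab'|[n [Hn Hzb]]].
  - exists N; intros n Hn; right; exists n; split; [exact Hn|].
    exists (z n); repeat split; [exact (Hz n)|apply le_refl|apply le_refl].
  - exact (Hab Hab').
  - exact (HN n Hn (common_ub_in_sym _ _ _ Hzb)).
Qed.

End LawsonCompact.

End ScottTopology.

Theorem corollary3p7 (T : Type) (le : T -> T -> Prop) (Hpo : is_poset le) :
  frechet (product_open (scott_open le) (scott_open le)) ->
  (compact (lawson_open le) (fun _ => True) \/
   (well_filtered (scott_open le) /\ coherent (scott_open le))) ->
  sober (scott_open le).
Proof.
  intros Hfr Hcase; apply (scott_sober_of_greatest T le Hpo).
  - intros A HA Hirr; split; [exact (proj1 Hirr)|]; intros a b Aa Ab.
    destruct (frechet_square_common_limit _ A a b (scott_open_full T le) Hfr Hirr Aa Ab)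
      as [z [Hz [Ha Hb]]].
    destruct Hcase as [HL|[Hwf Hcoh]].
    + exact (lawson_common_ub T le Hpo HL A z a b HA Hz Ha Hb).
    + exact (well_filtered_common_ub T le Hpo Hwf A z a b Hcoh HA Hz Ha Hb).
  - destruct Hcase as [HL|[Hwf _]].
    + exact (lawson_directed_greatest T le Hpo HL).
    + exact (well_filtered_directed_greatest T le Hpo Hwf).
Qed.
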